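(* Assume the orthonormal basis satisfies $|b_i(l)|^2=1/n$ for all $i,l\in G$, and let $\gamma=|h\rangle\langle h|$ with $|h(l)|^2=1/n$ for all $l\in G$. Then for every state $\rho$ on $L_2(G)$ and all $i,j\in G$, $$\Lambda_{i,j}(\rho\otimes\gamma)=V_{i,j}\rho V_{i,j}^*,\qquad V_{i,j}=n\,\mathcal O_hU_jB_i^*,$$ and $V_{i,j}$ is unitary.
   Context: Fix an integer $n\ge 1$ and $G=\{1,\dots,n\}$. $L_2(G)$ is the space of functions $f:G\to\mathbb C$ with inner product $\langle f,g\rangle=\sum_{k\in G}\overline{f(k)}g(k)$; $L_2(G^2)$, $L_2(G^3)$ are the analogous spaces on $G^2,G^3$, identified with tensor products via $(f\otimes g)(k,l)=f(k)g(l)$; the three factors of $L_2(G^3)=\mathcal H_1\otimes\mathcal H_2\otimes\mathcal H_3$ are numbered 1,2,3. For a vector $f$, $|f\rangle\langle f|$ is the operator $\phi\mapsto\langle f,\phi\rangle f$. $I$ is the identity. A state is a positive operator of trace 1. For $k,l\in G$, $k\oplus l$ is the unique element of $G$ congruent to $k+l$ modulo $n$. $\mathcal O_g$ is the multiplication operator $(\mathcal O_gf)(k)=g(k)f(k)$. $J:L_2(G)\to L_2(G^2)$ is $(Jf)(k,l)=f(k)\delta_{k,l}$. $U_k$ is the unitary $(U_kf)(m)=f(k\oplus m)$. $(b_k)_{k\in G}$ is a fixed orthonormal basis of $L_2(G)$ and $B_k=\mathcal O_{b_k}$. $\xi_{k,l}(m,r)=b_k(m)\delta_{m,r\oplus l}$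 and $F_{i,j}=|\xi_{i,j}\rangle\langle\xi_{i,j}|$. For a state $\gamma$, $\mathbf e(\gamma):=J\gamma J^*$. For states $\rho,\gamma$ with positive denominator, $$\Lambda_{i,j}(\rho\otimes\gamma):=\frac{\operatorname{Tr}_{1,2}(F_{i,j}\otimes I)(\rho\otimes\mathbf e(\gamma))(F_{i,j}\otimes I)}{\operatorname{Tr}_{1,2,3}(F_{i,j}\otimes I)(\rho\otimes\mathbf e(\gamma))(F_{i,j}\otimes I)},$$ with $\operatorname{Tr}_{1,2}$ the partial trace over $\mathcal H_1\otimes\mathcal H_2$ and $\operatorname{Tr}_{1,2,3}$ the full trace. *)

From HB Require Import structures.
From mathcomp Require Import all_boot all_order all_algebra.
Set Implicit Arguments. Unset Strict Implicit. Unset Printing Implicit Defensive.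
Import Order.TTheory GRing.Theory Num.Theory.
Local Open Scope ring_scope.

(* A vector is a function T -> C; a linear map L_2(T) -> L_2(U) is given by
   its kernel (matrix) U -> T -> C, acting as (A f)(u) = \sum_t A u t * f t. *)
Section Ops.
Variable C : numClosedFieldType.

Definition vec (T : finType) := T -> C.
Definition lin (T U : finType) := U -> T -> C.
Definition op (T : finType) := lin T T.

Definition inner (T : finType) (f g : vec T) : C := \sum_k (f k)^* * g k.
Definition opapp (T U : finType) (A : lin T U) (f : vec T) : vec U :=
  fun u => \sum_t A u t * f t.
Definition ocomp (T U W : finType) (A : lin U W) (B : lin T U) : lin T W :=
  fun w t => \sum_u A w u * B u t.
Definition adjoint (T U : finType) (A : lin T U) : lin U T :=
  fun t u => (A u t)^*.
Definition oscale (T U : finType) (a : C) (A : lin T U) : lin T U :=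
  fun u t => a * A u t.
Definition idop (T : finType) : op T := fun x y => (x == y)%:R.
Definition ketbra (T : finType) (f : vec T) : op T := fun x y => f x * (f y)^*.
Definition tensor (T1 T2 : finType) (A : op T1) (B : op T2) : op (prod T1 T2) :=
  fun x y => A x.1 y.1 * B x.2 y.2.
Definition otrace (T : finType) (A : op T) : C := \sum_x A x x.
Definition reassoc (T1 T2 T3 : finType) (A : op (prod T1 (prod T2 T3))) : op (prod (prod T1 T2) T3) :=
  fun x y => A (x.1.1, (x.1.2, x.2)) (y.1.1, (y.1.2, y.2)).
Definition ptr12 (T1 T2 T3 : finType) (A : op (prod (prod T1 T2) T3)) : op T3 :=
  fun k l => \sum_(u : (prod T1 T2)) A (u, k) (u, l).

Definition positive_op (T : finType) (A : op T) : Prop :=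
  forall f : vec T, 0 <= inner f (opapp A f).
Definition is_state (T : finType) (A : op T) : Prop :=
  positive_op A /\ otrace A = 1.
Definition unitary (T : finType) (V : op T) : Prop :=
  ocomp (adjoint V) V = @idop T /\ ocomp V (adjoint V) = @idop T.
Definition orthonormal_basis (T : finType) (b : T -> vec T) : Prop :=
  (forall i j, inner (b i) (b j) = (i == j)%:R) /\
  (forall f : vec T, exists c : T -> C, forall x, f x = \sum_i c i * b i x).

(* G = {1,...,n} is represented by 'I_n, the ordinal k standing for k+1. *)
Lemma ord_pos (n : nat) (k : 'I_n) : (0 < n)%N.
Proof. exact: leq_ltn_trans (leq0n k) (ltn_ord k). Qed.

(* k (+) l : the element of {1..n} congruent to k+l mod n. With labels
   k = k'+1, l = l'+1 it has label ((k'+l'+1) %% n) + 1. *)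
Definition oplus (n : nat) (k l : 'I_n) : 'I_n :=
  Ordinal (ltn_pmod (k + l + 1)%N (ord_pos k)).

Variable n : nat.
Notation G := 'I_n.

Definition mulop (g : vec G) : op G := fun k l => (k == l)%:R * g k.
Definition Jmap : lin G (prod G G) := fun kl m => ((kl.1 == kl.2) && (kl.1 == m))%:R.
(* (U_k f)(m) = f(k (+) m) *)
Definition Ushift (k : G) : op G := fun m r => (r == oplus k m)%:R.
Definition Bop (b : G -> vec G) (k : G) : op G := mulop (b k).
Definition xi (b : G -> vec G) (k l : G) : vec (prod G G) :=
  fun mr => b k mr.1 * (mr.1 == oplus mr.2 l)%:R.
Definition Fop (b : G -> vec G) (i j : G) : op (prod G G) := ketbra (xi b i j).
Definition emb (g : op G) : op (prod G G) := ocomp (ocomp Jmap g) (adjoint Jmap).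

Definition Lambda_num (b : G -> vec G) (i j : G) (rho gam : op G) : op (prod (prod G G) G) :=
  let FI := tensor (Fop b i j) (@idop G) in
  ocomp (ocomp FI (reassoc (tensor rho (emb gam)))) FI.
Definition Lambda_den (b : G -> vec G) (i j : G) (rho gam : op G) : C :=
  otrace (Lambda_num b i j rho gam).
Definition Lambda (b : G -> vec G) (i j : G) (rho gam : op G) : op G :=
  oscale (Lambda_den b i j rho gam)^-1 (ptr12 (Lambda_num b i j rho gam)).

End Ops.

Arguments idop {C T}.
Arguments Jmap {C n}.
Arguments Ushift {C n}.

From HB Require Import structures.
From mathcomp Require Import all_boot all_order all_algebra ring.
From Stdlib Require Import FunctionalExtensionality.
Import Order.TTheory GRing.Theory Num.Theory.
Local Open Scope ring_scope.

(* Because b_i and h are flat, V = n O_h U_j B_i^* is a monomial matrix: row k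
   has the single entry n h(k) conj(b_i(j (+) k)), of modulus one, in column
   j (+) k, so V is unitary.  Projecting onto xi_{i,j} ties the first register
   to j (+) (third register), whence the partial trace of the numerator is
   |xi_{i,j}|^2 n^-2 V rho V^* with |xi_{i,j}| = 1; its trace n^-2 is the
   denominator. *)

Section Kernels.
Context {C : numClosedFieldType}.

Lemma lin_ext (T U : finType) (A B : lin C T U) :
  (forall u t, A u t = B u t) -> A = B.
Proof.
by move=> AB; apply: functional_extensionality => u;
  apply: functional_extensionality => t; exact: AB.
Qed.

Lemma sum_single {T : finType} (a : T) (F : T -> C) :
  (forall k, k != a -> F k = 0) -> \sum_k F k = F a.
Proof.
by move=> F0; rewrite (bigD1 a) //= big1 ?addr0 // => k /andP[_]; exact: F0.
Qed.

Lemma sum_pair (T1 T2 : finType) (F : (T1 * T2)%type -> C) :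
  \sum_p F p = \sum_a \sum_b F (a, b).
Proof. by rewrite pair_bigA; apply: eq_bigr => -[]. Qed.

Lemma otrace_scale (T : finType) (c : C) (A : op C T) :
  otrace (oscale c A) = c * otrace A.
Proof. by rewrite /otrace big_distrr. Qed.

Lemma otrace_ptr12 (T1 T2 T3 : finType) (A : op C ((T1 * T2) * T3)%type) :
  otrace (ptr12 A) = otrace A.
Proof. by rewrite /otrace /ptr12 [RHS]sum_pair exchange_big. Qed.

Lemma ptr12_ketbra_sandwich (T1 T2 T3 : finType) (f : vec C (T1 * T2)%type)
    (R : op C ((T1 * T2) * T3)%type) k l :
  let FI := tensor (ketbra f) idop in
  ptr12 (ocomp (ocomp FI R) FI) k l
  = inner f f * \sum_q \sum_p (f p)^* * R (p, k) (q, l) * f q.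
Proof.
move=> FI.
rewrite /ptr12 /ocomp /inner big_distrl; apply: eq_bigr => u _.
rewrite sum_pair exchange_big (sum_single l) => [|m Hm]; last first.
  by apply: big1 => q _; rewrite /FI /tensor /idop /= (negbTE Hm) !mulr0.
rewrite big_distrr; apply: eq_bigr => q _.
rewrite big_distrl sum_pair exchange_big (sum_single k) => [|m Hm]; last first.
  by apply: big1 => p _; rewrite /FI /tensor /idop /= eq_sym (negbTE Hm) !(mulr0, mul0r).
rewrite big_distrr; apply: eq_bigr => p _.
rewrite /FI /tensor /ketbra /idop /= !eqxx !mulr1n; ring.
Qed.

Section Monomial.
Context {T : finType} (s : T -> T) (a : T -> C).

Definition monomial : op C T := fun k t => a k * (t == s k)%:R.

Lemma monomial_conjugate (rho : op C T) k l :
  ocomp (ocomp monomial rho) (adjoint monomial) k l = a k * rho (s k) (s l) * (a l)^*.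
Proof.
rewrite /ocomp (sum_single (s l)) => [|t Ht]; last first.
  by rewrite /adjoint /monomial (negbTE Ht) !(mulr0, conjC0).
rewrite (sum_single (s k)) => [|t Ht]; last first.
  by rewrite /monomial (negbTE Ht) mulr0 mul0r.
by rewrite /adjoint /monomial !eqxx rmorphM /= conjC_nat !mulr1n !mulr1.
Qed.

Hypotheses (s_inj : injective s) (a_unit : forall k, a k * (a k)^* = 1).

Lemma monomial_unitary : unitary monomial.
Proof.
split; apply: lin_ext => t u; rewrite /ocomp /adjoint /idop /monomial.
- rewrite (sum_single (invF s_inj t)) => [|k Hk]; last first.
    suff /negbTE-> : t != s k by rewrite !(mulr0, conjC0, mul0r).
    by apply: contra Hk => /eqP->; rewrite invF_f.
  rewrite f_invF eqxx mulr1n (eq_sym u).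
  by case: eqP => [->|_]; rewrite ?mulr0 // !mulr1n !mulr1 mulrC a_unit.
- rewrite (sum_single (s t)) => [|v Hv]; last by rewrite (negbTE Hv) !(mulr0, mul0r).
  rewrite eqxx mulr1n (inj_eq s_inj).
  by case: eqP => [->|_]; rewrite ?(mulr0, conjC0) // !mulr1n !mulr1 a_unit.
Qed.

Lemma otrace_monomial_conjugate (rho : op C T) :
  otrace (ocomp (ocomp monomial rho) (adjoint monomial)) = otrace rho.
Proof.
rewrite /otrace; under eq_bigr do rewrite monomial_conjugate mulrAC a_unit mul1r.
by rewrite [RHS](reindex_inj s_inj).
Qed.

End Monomial.
End Kernels.

Lemma oplusC {n} (k l : 'I_n) : oplus k l = oplus l k.
Proof. by apply: val_inj; rewrite /= (addnC k). Qed.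

Lemma oplus_inj {n} (j : 'I_n) : injective (oplus j).
Proof.
move=> k k' /(congr1 val) /= /eqP.
rewrite -!addnA !(addnC _ 1%N) !addnA eqn_modDl !modn_small ?ltn_ord // => /eqP.
exact: val_inj.
Qed.

Section Teleportation.
Variables (C : numClosedFieldType) (n : nat) (b : 'I_n -> vec C 'I_n) (i j : 'I_n).

Lemma emb_entry (g : op C 'I_n) x y :
  emb g x y = (x.1 == x.2)%:R * (y.1 == y.2)%:R * g x.1 y.1.
Proof.
rewrite /emb /ocomp (sum_single y.1) => [|u Hu]; last first.
  by rewrite /adjoint /Jmap (eq_sym y.1 u) (negbTE Hu) andbF conjC0 mulr0.
rewrite (sum_single x.1) => [|v Hv]; last first.
  by rewrite /Jmap (eq_sym x.1 v) (negbTE Hv) andbF mul0r.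
by rewrite /adjoint /Jmap !eqxx !andbT conjC_nat; ring.
Qed.

Lemma ptr12_Lambda_num (rho gam : op C 'I_n) k l :
  ptr12 (Lambda_num b i j rho gam) k l = inner (xi b i j) (xi b i j) *
    ((b i (oplus j k))^* * rho (oplus j k) (oplus j l) * gam k l * b i (oplus j l)).
Proof.
rewrite /Lambda_num /Fop ptr12_ketbra_sandwich; congr (_ * _).
rewrite sum_pair exchange_big (sum_single l) => [|m Hm]; last first.
  apply: big1 => a _; apply: big1 => p _.
  by rewrite /reassoc /tensor emb_entry /= (negbTE Hm) !(mulr0, mul0r).
rewrite (sum_single (oplus l j)) => [|a Ha]; last first.
  by apply: big1 => p _; rewrite /xi /= (negbTE Ha) !mulr0.
rewrite sum_pair exchange_big (sum_single k) => [|m Hm]; last first.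
  apply: big1 => a _.
  by rewrite /reassoc /tensor emb_entry /= (negbTE Hm) !(mulr0, mul0r).
rewrite (sum_single (oplus k j)) => [|a Ha]; last first.
  by rewrite /xi /= (negbTE Ha) !(mulr0, conjC0, mul0r).
rewrite /xi /reassoc /tensor emb_entry /= !eqxx (oplusC k) (oplusC l) !mulr1n; ring.
Qed.

Hypotheses (n_gt0 : (0 < n)%N) (b_flat : forall i l, `|b i l| ^+ 2 = n%:R^-1).

Lemma natrn_neq0 : (n%:R : C) != 0.
Proof. by rewrite pnatr_eq0 -lt0n. Qed.

Lemma inner_xi : inner (xi b i j) (xi b i j) = 1.
Proof.
rewrite /inner sum_pair exchange_big /=.
under eq_bigr => r _.
  rewrite (sum_single (oplus r j)) => [|m Hm]; last first.
    by rewrite /xi /= (negbTE Hm) !(mulr0, conjC0, mul0r).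
  rewrite /xi /= eqxx mulr1n mulr1 mulrC -normCK b_flat.
  over.
by rewrite sumr_const card_ord -[_ *+ n]mulr_natr mulVf // natrn_neq0.
Qed.

Variables (h : vec C 'I_n) (h_flat : forall l, `|h l| ^+ 2 = n%:R^-1).

Definition Vcoef k := n%:R * h k * (b i (oplus j k))^*.
Definition Vop := monomial (oplus j) Vcoef.

Lemma scale_mulop_Ushift_adjBop :
  oscale n%:R (ocomp (mulop h) (ocomp (Ushift j) (adjoint (Bop b i)))) = Vop.
Proof.
apply: lin_ext => k t; rewrite /oscale /ocomp /Vop /monomial /Vcoef.
rewrite (sum_single k) => [|u Hu]; last by rewrite /mulop eq_sym (negbTE Hu) !mul0r.
rewrite (sum_single (oplus j k)) => [|w Hw]; last by rewrite /Ushift (negbTE Hw) mul0r.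
rewrite /mulop /Ushift /adjoint /Bop /mulop !eqxx rmorphM /= conjC_nat (eq_sym t).
by case: eqP => [->|_]; rewrite ?(mulr0, mul0r) // !mulr1n; ring.
Qed.

Lemma Vcoef_unit k : Vcoef k * (Vcoef k)^* = 1.
Proof.
rewrite /Vcoef !rmorphM /= conjC_nat conjCK.
have -> : n%:R * h k * (b i (oplus j k))^* * (n%:R * (h k)^* * b i (oplus j k))
    = n%:R * n%:R * (h k * (h k)^*) * (b i (oplus j k) * (b i (oplus j k))^*) by ring.
by rewrite -!normCK h_flat b_flat; field; rewrite natrn_neq0.
Qed.

Lemma ptr12_Lambda_num_ketbra (rho : op C 'I_n) :
  ptr12 (Lambda_num b i j rho (ketbra h))
  = oscale (n%:R ^- 2) (ocomp (ocomp Vop rho) (adjoint Vop)).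
Proof.
apply: lin_ext => k l.
rewrite ptr12_Lambda_num inner_xi mul1r /oscale monomial_conjugate /Vcoef /ketbra.
by rewrite !rmorphM /= conjC_nat conjCK; field; rewrite natrn_neq0.
Qed.

Lemma Lambda_den_ketbra (rho : op C 'I_n) :
  otrace rho = 1 -> Lambda_den b i j rho (ketbra h) = n%:R ^- 2.
Proof.
move=> tr1; rewrite /Lambda_den -otrace_ptr12 ptr12_Lambda_num_ketbra otrace_scale.
by rewrite otrace_monomial_conjugate ?tr1 ?mulr1 //; [exact: oplus_inj | exact: Vcoef_unit].
Qed.

Lemma Lambda_ketbra (rho : op C 'I_n) :
  otrace rho = 1 -> Lambda b i j rho (ketbra h) = ocomp (ocomp Vop rho) (adjoint Vop).
Proof.
move=> tr1; rewrite /Lambda Lambda_den_ketbra // ptr12_Lambda_num_ketbra.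
apply: lin_ext => k l; rewrite /oscale mulrA mulVf ?mul1r //.
by rewrite invr_eq0 expf_neq0 // natrn_neq0.
Qed.

Lemma Vop_unitary : unitary Vop.
Proof. by apply: monomial_unitary; [exact: oplus_inj | exact: Vcoef_unit]. Qed.

End Teleportation.

Theorem mainTheorem15 (C : numClosedFieldType) (n : nat) (hn : (0 < n)%N)
  (b : 'I_n -> 'I_n -> C) (hb : orthonormal_basis b)
  (hbflat : forall i l : 'I_n, `|b i l| ^+ 2 = n%:R^-1)
  (h : 'I_n -> C) (hh : forall l : 'I_n, `|h l| ^+ 2 = n%:R^-1)
  (rho : op C 'I_n) (hrho : is_state rho) (i j : 'I_n) :
  let gam := ketbra h in
  let V := oscale n%:R (ocomp (mulop h) (ocomp (Ushift j) (adjoint (Bop b i)))) in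
  0 < Lambda_den b i j rho gam /\
  Lambda b i j rho gam = ocomp (ocomp V rho) (adjoint V) /\
  unitary V.
Proof.
move=> gam V; have [_ tr1] := hrho.
rewrite /gam /V scale_mulop_Ushift_adjBop; split; [|split].
- by rewrite Lambda_den_ketbra // invr_gt0 exprn_gt0 // ltr0n.
- by rewrite Lambda_ketbra.
- exact: Vop_unitary.
Qed.
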